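(* Let $\beta\in[0,1]$ and let $f\in\mathcal{A}_{\beta}$ with $f(z)=z+\sum_{n=2}^{\infty}a_nz^n$. Then for every real $\mu$, $$|a_3-\mu a_2^2|\le\begin{cases}\dfrac{(8-12\mu)+(8\mu-8)\beta+2\beta^2}{(3-2\beta)(2-\beta)^2}, & \mu<0,\\[2mm] \dfrac{2}{3-2\beta}, & 0\le\mu\le\dfrac{(2-\beta)^2}{3-2\beta},\\[2mm] -\dfrac{(8-12\mu)+(8\mu-8)\beta+2\beta^2}{(3-2\beta)(2-\beta)^2}, & \mu>\dfrac{(2-\beta)^2}{3-2\beta}.\end{cases}$$ All inequalities are sharp.
   Context: $\mathbb{D}=\{z\in\mathbb{C}:|z|<1\}$. For $\beta\in[0,1]$, $\mathcal{A}_{\beta}$ is the set of analytic functions $f$ on $\mathbb{D}$ with $f(0)=0$, $f'(0)=1$ (so $f(z)=z+\sum_{n\ge2}a_nz^n$) such that $\operatorname{Re}\big(\beta f(z)/z+(1-\beta)f'(z)\big)>0$ for all $z\in\mathbb{D}$. Sharp means that for each $\mu$ in each range there is $f\in\mathcal{A}_\beta$ attaining equality (for $\mu<0$ or $\mu>(2-\beta)^2/(3-2\beta)$: $f(z)=z+\sum_{n\ge2}\frac{2}{n-\beta(n-1)}z^n$; for the middle range: $f$ with $\beta f(z)/z+(1-\beta)f'(z)=\frac{1+z^2}{1-z^2}$). *)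

From Stdlib Require Import Reals.
From Coquelicot Require Import Coquelicot.
Open Scope R_scope.

Definition in_disk (z : C) : Prop := Cmod z < 1.

Definition analytic_on_disk_with_coeffs (f : C -> C) (a : nat -> C) : Prop :=
  forall z : C, in_disk z -> is_pseries (K := C_AbsRing) (V := C_NormedModule) a z (f z).

(* At z = 0 the expression beta f(z)/z + (1-beta) f'(z) is
   understood by removable singularity and equals beta + (1-beta) = 1 > 0, so
   the condition is imposed for z <> 0. *)
Definition in_A (beta : R) (f : C -> C) (a : nat -> C) : Prop :=
  analytic_on_disk_with_coeffs f a /\
  a 0%nat = RtoC 0 /\ a 1%nat = RtoC 1 /\
  (forall z : C, in_disk z ->
     exists l : C, is_derive (K := C_AbsRing) (V := C_NormedModule) f z l /\
       (z <> RtoC 0 ->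
          0 < Re (Cplus (Cmult (RtoC beta) (Cdiv (f z) z))
                        (Cmult (RtoC (1 - beta)) l)))).

Definition phi (beta mu : R) : R :=
  ((8 - 12 * mu) + (8 * mu - 8) * beta + 2 * beta ^ 2)
  / ((3 - 2 * beta) * (2 - beta) ^ 2).

Definition fekete_szego_bound (beta mu : R) : R :=
  if Rlt_dec mu 0 then phi beta mu
  else if Rle_dec mu ((2 - beta) ^ 2 / (3 - 2 * beta)) then 2 / (3 - 2 * beta)
  else - phi beta mu.

Definition fs_functional (a : nat -> C) (mu : R) : C :=
  Cminus (a 3%nat) (Cmult (RtoC mu) (Cmult (a 2%nat) (a 2%nat))).

From Stdlib Require Import Reals Lra Lia Psatz.
From Coquelicot Require Import Coquelicot.
Open Scope R_scope.

(* Set [p(z) = beta f(z)/z + (1 - beta) f'(z) = sum_j c_j z^j].  Differentiating termwise gives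
   [c_j = (j + 1 - j beta) a_(j+1)], so [c_0 = 1] and
   [a_3 - mu a_2^2 = (c_2 - nu c_1^2) / (3 - 2 beta)] with [nu = mu (3 - 2 beta) / (2 - beta)^2],
   while [Re p > 0].  The theorem thus reduces to the classical bound
   [|c_2 - nu c_1^2| <= 2 max(1, |2 nu - 1|)] for functions of positive real part, which follows
   from [|c_2 - c_1^2/2| <= 2 - |c_1|^2/2].  The latter comes from the positivity of the Toeplitz
   form built from [(2, c_1 r, c_2 r^2)]: averaging [Re p(r w) |x_0 + x_1 w + x_2 w^2|^2] over the
   [m]-th roots of unity [w] reproduces this form up to a tail vanishing as [m -> oo]; one then
   evaluates it at a suitable vector and lets [r -> 1].  Equality is attained for
   [p(z) = (1 + z)/(1 - z)] and [p(z) = (1 + z^2)/(1 - z^2)]. *)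

Notation is_seriesC := (is_series (K := C_AbsRing) (V := C_NormedModule)).
Notation sum_nC := (sum_n (G := C_AbelianMonoid)).

(* The generic series lemmas state equations with [plus], [scal], ... of a normed module;
   restating them at type [C] exposes the field operations to [ring] and [field]. *)
Ltac C_eq := match goal with |- ?A = ?B => change (@eq C A B) end.

Lemma pow_n_Cpow (z : C) k : pow_n (K := C_AbsRing) z k = (z ^ k)%C.
Proof. induction k; simpl; auto. Qed.

Lemma sum_nC_S (a : nat -> C) n : sum_nC a (S n) = (sum_nC a n + a (S n))%C.
Proof. exact (sum_Sn a n). Qed.

Lemma sum_nC_O (a : nat -> C) : sum_nC a 0 = a 0%nat.
Proof. exact (sum_O a). Qed.

Lemma is_seriesC_of_bound (a : nat -> C) l (e : nat -> R) :
  (forall n, Cmod (sum_nC a n - l) <= e n) ->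
  (forall eps, 0 < eps -> exists N, forall n, (N <= n)%nat -> e n < eps) ->
  is_seriesC a l.
Proof.
  intros Hle Hlim. apply filterlim_locally_ball_norm. intros eps.
  destruct (Hlim eps (cond_pos eps)) as [N HN]. exists N. intros n Hn.
  eapply Rle_lt_trans; [apply Hle | exact (HN n Hn)].
Qed.

Lemma is_seriesC_unique (a : nat -> C) l l' : is_seriesC a l -> is_seriesC a l' -> l = l'.
Proof. intros H1 H2. exact (filterlim_locally_unique (F := eventually) _ _ _ H1 H2). Qed.

Lemma is_seriesC_finite (a : nat -> C) N :
  (forall n, (N < n)%nat -> a n = 0%C) -> is_seriesC a (sum_nC a N).
Proof.
  intros Hz.
  assert (Hconst : forall n, (N <= n)%nat -> sum_nC a n = sum_nC a N).
  { intros n Hn. induction n as [|n IH].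
    - now replace N with 0%nat by lia.
    - destruct (Nat.eq_dec N (S n)) as [->|]; [reflexivity|].
      rewrite sum_nC_S, Hz, IH by lia. apply Cplus_0_r. }
  apply is_seriesC_of_bound with (fun n => if (n <? N)%nat then Cmod (sum_nC a n - sum_nC a N) else 0).
  - intros n. destruct (Nat.ltb_spec n N); [lra|].
    rewrite Hconst by lia. unfold Cminus. rewrite Cplus_opp_r, Cmod_0. lra.
  - intros eps Heps. exists N. intros n Hn. destruct (Nat.ltb_spec n N); [lia|lra].
Qed.

Lemma Cmod_sum_n_le (a : nat -> C) (b : nat -> R) :
  (forall n, Cmod (a n) <= b n) -> forall n, Cmod (sum_nC a n) <= sum_n b n.
Proof.
  intros Hab n. induction n.
  - rewrite sum_nC_O, sum_O. apply Hab.
  - rewrite sum_nC_S, sum_Sn. eapply Rle_trans; [apply Cmod_triangle|].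
    apply Rplus_le_compat; auto.
Qed.

Lemma is_seriesC_Cmod_le (a : nat -> C) l (b : nat -> R) L :
  is_seriesC a l -> (forall n, Cmod (a n) <= b n) -> is_series b L -> Cmod l <= L.
Proof.
  intros Ha Hab Hb. destruct (Rle_dec (Cmod l) L) as [|Hgt]; auto. exfalso.
  set (eps := (Cmod l - L) / 2). assert (Heps : 0 < eps) by (unfold eps; lra).
  destruct (proj1 (filterlim_locally_ball_norm (K := C_AbsRing) _ _) Ha (mkposreal _ Heps))
    as [N1 H1].
  destruct (proj1 (filterlim_locally_ball_norm (K := R_AbsRing) _ _) Hb (mkposreal _ Heps))
    as [N2 H2].
  set (n := (N1 + N2)%nat).
  specialize (H1 n ltac:(lia)). specialize (H2 n ltac:(lia)).
  change (Cmod (sum_nC a n - l) < eps) in H1.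
  change (Rabs (sum_n b n - L) < eps) in H2.
  pose proof (Cmod_sum_n_le a b Hab n).
  assert (Cmod l <= Cmod (sum_nC a n) + Cmod (sum_nC a n - l)).
  { rewrite <- (Cmod_opp (sum_nC a n - l)).
    replace l with (sum_nC a n + - (sum_nC a n - l))%C at 1 by ring.
    apply Cmod_triangle. }
  apply Rabs_def2 in H2. unfold eps in *. lra.
Qed.

Lemma is_seriesC_terms_bounded (a : nat -> C) l :
  is_seriesC a l -> exists M, forall n, Cmod (a n) <= M.
Proof.
  intros Ha. destruct (filterlim_bounded (K := C_AbsRing) (sum_nC a) (ex_intro _ l Ha)) as [M HM].
  exists (M + M). intros [|n].
  - pose proof (HM 0%nat) as H0. change (Cmod (sum_nC a 0) <= M) in H0.
    rewrite sum_nC_O in H0. pose proof (Cmod_ge_0 (a 0%nat)). lra.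
  - pose proof (HM (S n)) as HS. pose proof (HM n) as Hn.
    change (Cmod (sum_nC a (S n)) <= M) in HS. change (Cmod (sum_nC a n) <= M) in Hn.
    replace (a (S n)) with (sum_nC a (S n) - sum_nC a n)%C by (rewrite sum_nC_S; ring).
    eapply Rle_trans; [apply Cmod_triangle|]. rewrite Cmod_opp. lra.
Qed.

Lemma one_sub_neq_0 z : Cmod z < 1 -> (1 - z)%C <> RtoC 0.
Proof. intros Hz h. apply Ceq_minus in h. subst. rewrite Cmod_1 in Hz. lra. Qed.

Lemma is_seriesC_geom (z : C) : Cmod z < 1 -> is_seriesC (fun j => z ^ j)%C (/ (1 - z))%C.
Proof.
  intros Hz. pose proof (one_sub_neq_0 z Hz) as Hz1.
  assert (Hsum : forall n, sum_nC (fun j => z ^ j)%C n = ((1 - z ^ S n) / (1 - z))%C).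
  { induction n.
    - rewrite sum_nC_O. simpl. field. auto.
    - rewrite sum_nC_S, IHn. simpl. field. auto. }
  apply is_seriesC_of_bound with (fun n => Cmod z ^ S n / Cmod (1 - z)).
  - intros n. rewrite Hsum. right.
    replace ((1 - z ^ S n) / (1 - z) - / (1 - z))%C with (- (z ^ S n / (1 - z)))%C
      by (field; auto).
    rewrite Cmod_opp, Cmod_div, Cmod_pow by auto. reflexivity.
  - intros eps Heps. assert (Hd : 0 < Cmod (1 - z)) by (apply Cmod_gt_0; auto).
    destruct (pow_lt_1_zero (Cmod z) ltac:(rewrite Rabs_pos_eq; [lra | apply Cmod_ge_0])
                (eps * Cmod (1 - z))) as [N HN]; [nra|].
    exists N. intros n Hn. specialize (HN (S n) ltac:(lia)).
    rewrite Rabs_pos_eq in HN by (apply pow_le, Cmod_ge_0).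
    apply (Rmult_lt_reg_r (Cmod (1 - z))); [lra|].
    unfold Rdiv. rewrite Rmult_assoc, Rinv_l; lra.
Qed.

Lemma coef_geometric_decay (a : nat -> C) (t : R) l :
  0 < t -> is_seriesC (fun n => a n * t ^ n)%C l ->
  forall s, 0 <= s -> exists M, 0 <= M /\ forall n, Cmod (a n) * s ^ n <= M * (s / t) ^ n.
Proof.
  intros Ht Hl s Hs. destruct (is_seriesC_terms_bounded _ _ Hl) as [M HM].
  exists M. split.
  - specialize (HM 0%nat). simpl in HM. rewrite Cmult_1_r in HM.
    pose proof (Cmod_ge_0 (a 0%nat)). lra.
  - intros n. specialize (HM n). rewrite Cmod_mult, Cmod_pow, Cmod_R, Rabs_pos_eq in HM by lra.
    replace (s ^ n) with (t ^ n * (s / t) ^ n) by (rewrite <- Rpow_mult_distr; f_equal; field; lra).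
    rewrite <- Rmult_assoc. apply Rmult_le_compat_r; [apply pow_le; apply Rdiv_le_0_compat|]; lra.
Qed.

(** * Termwise differentiation of power series *)

Lemma CV_radius_const_1 : CV_radius (fun _ => 1) = 1.
Proof.
  rewrite (CV_radius_finite_DAlembert _ 1).
  - simpl. now rewrite Rinv_1.
  - intros. lra.
  - lra.
  - eapply is_lim_seq_ext; [|apply is_lim_seq_const].
    intros n. simpl. now rewrite Rdiv_1_r, Rabs_R1.
Qed.

Lemma ex_series_succ_succ_pow (q : R) :
  0 <= q < 1 -> ex_series (fun n => INR (S n) * INR (S (S n)) * q ^ n).
Proof.
  intros Hq. assert (H : Rbar_lt (Rabs q) (CV_radius (PS_derive (fun _ => 1)))).
  { rewrite !CV_radius_derive, CV_radius_const_1. simpl. rewrite Rabs_pos_eq; lra. }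
  apply ex_pseries_derive, ex_pseries_R in H. revert H. apply ex_series_ext.
  intros n. unfold PS_derive. now rewrite Rmult_1_r, Rmult_assoc.
Qed.

Definition pow_lin_rem (y z : C) (n : nat) : C :=
  (y ^ n - z ^ n - INR n * z ^ pred n * (y - z))%C.

Lemma pow_lin_rem_S y z n : pow_lin_rem y z (S n) =
  (y * pow_lin_rem y z n + INR n * z ^ pred n * ((y - z) * (y - z)))%C.
Proof.
  unfold pow_lin_rem. destruct n as [|n]; [simpl; ring|].
  simpl pred. rewrite !S_INR, !RtoC_plus. simpl. ring.
Qed.

Lemma pow_lin_rem_bound y z s n : 0 < s -> Cmod y <= s -> Cmod z <= s ->
  s * s * Cmod (pow_lin_rem y z n) <= INR n * INR n * s ^ n * (Cmod (y - z) * Cmod (y - z)).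
Proof.
  intros Hs Hy Hz. set (d := Cmod (y - z)). assert (Hd : 0 <= d) by apply Cmod_ge_0.
  induction n as [|n IH].
  - replace (pow_lin_rem y z 0) with (RtoC 0) by (unfold pow_lin_rem; simpl; C_eq; ring).
    rewrite Cmod_0. simpl. lra.
  - assert (Hrec : Cmod (pow_lin_rem y z (S n))
                   <= s * Cmod (pow_lin_rem y z n) + INR n * Cmod (z ^ pred n) * (d * d)).
    { rewrite pow_lin_rem_S. eapply Rle_trans; [apply Cmod_triangle|].
      rewrite !Cmod_mult, Cmod_R, Rabs_pos_eq by apply pos_INR.
      apply Rplus_le_compat_r, Rmult_le_compat_r; [apply Cmod_ge_0 | exact Hy]. }
    assert (Hpow : s * s * Cmod (z ^ pred n) <= s ^ S n \/ n = 0%nat).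
    { destruct n as [|k]; [now right|left]. simpl pred. rewrite Cmod_pow.
      replace (s ^ S (S k)) with (s * s * s ^ k) by (simpl; ring).
      apply Rmult_le_compat_l; [nra|]. apply pow_incr. split; [apply Cmod_ge_0 | exact Hz]. }
    assert (Hlast : s * s * (INR n * Cmod (z ^ pred n) * (d * d)) <= INR n * s ^ S n * (d * d)).
    { destruct Hpow as [Hpow | ->]; [|simpl; lra].
      replace (s * s * (INR n * Cmod (z ^ pred n) * (d * d)))
        with (INR n * (s * s * Cmod (z ^ pred n)) * (d * d)) by ring.
      apply Rmult_le_compat_r; [nra|]. apply Rmult_le_compat_l; [apply pos_INR | exact Hpow]. }
    assert (Hstep : s * (s * s * Cmod (pow_lin_rem y z n)) <= s * (INR n * INR n * s ^ n * (d * d)))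
      by (apply Rmult_le_compat_l; lra).
    assert (Hnn : 0 <= INR n * s ^ S n * (d * d)).
    { apply Rmult_le_pos; [apply Rmult_le_pos; [apply pos_INR | apply pow_le; lra] | nra]. }
    assert (Hsn : 0 <= s ^ S n * (d * d)) by (apply Rmult_le_pos; [apply pow_le; lra | nra]).
    rewrite S_INR. replace (s ^ S n) with (s * s ^ n) in * by reflexivity.
    assert (s * s * Cmod (pow_lin_rem y z (S n))
            <= s * (s * s * Cmod (pow_lin_rem y z n)) + s * s * (INR n * Cmod (z ^ pred n) * (d * d)))
      by (apply (Rmult_le_compat_l (s * s)) in Hrec; [lra | nra]).
    nra.
Qed.

Lemma is_derive_of_quadratic_remainder (f : C -> C) (z l : C) (delta K : R) :
  0 < delta ->
  (forall y, Cmod (y - z) < delta -> Cmod (f y - f z - (y - z) * l) <= K * (Cmod (y - z) * Cmod (y - z))) ->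
  is_derive (K := C_AbsRing) (V := C_NormedModule) f z l.
Proof.
  intros Hdelta Hrem. split; [apply is_linear_scal_l|].
  intros x Hx.
  pose proof (is_filter_lim_locally_unique (K := C_AbsRing) (V := AbsRing_NormedModule C_AbsRing) z x Hx)
    as <-.
  intros eps. set (K' := Rabs K + 1). assert (HK' : 0 < K') by (unfold K'; pose proof (Rabs_pos K); lra).
  assert (Hd : 0 < Rmin delta (eps / K'))
    by (apply Rmin_pos; [lra | apply Rdiv_lt_0_compat; [apply cond_pos | lra]]).
  exists (mkposreal _ Hd). intros y Hy.
  change (Cmod (y - z) < Rmin delta (eps / K')) in Hy.
  change (Cmod (f y - f z - (y - z) * l) <= eps * Cmod (y - z)).
  set (D := Cmod (y - z)) in *. assert (HD : 0 <= D) by apply Cmod_ge_0.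
  assert (HDe : K' * D <= eps).
  { apply Rlt_le. apply (Rmult_lt_reg_l (/ K')); [apply Rinv_0_lt_compat; lra|].
    rewrite <- Rmult_assoc, Rinv_l, Rmult_1_l by lra. rewrite Rmult_comm.
    eapply Rlt_le_trans; [apply Hy | apply Rmin_r]. }
  eapply Rle_trans; [apply Hrem; eapply Rlt_le_trans; [apply Hy | apply Rmin_l]|].
  assert (K <= K') by (unfold K'; pose proof (Rle_abs K); lra).
  change (K * (D * D) <= eps * D). nra.
Qed.

Lemma derivative_term_bound (A rho s M q : R) n :
  0 <= rho <= s -> 0 < s -> 0 <= A -> 0 <= q -> A * s ^ n <= M * q ^ n ->
  INR n * A * rho ^ pred n <= M / s * (INR (S n) * INR (S (S n)) * q ^ n).
Proof.
  intros Hrho Hs HA Hq Hb. destruct n as [|k].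
  - simpl. rewrite Rmult_0_l, Rmult_0_l.
    assert (0 <= M) by (simpl in Hb; lra).
    apply Rmult_le_pos; [apply Rdiv_le_0_compat; lra | simpl; nra].
  - simpl pred. assert (Hk : rho ^ k <= s ^ k) by (apply pow_incr; lra).
    assert (Hsk : A * rho ^ k <= M / s * q ^ S k).
    { apply (Rmult_le_reg_l s); [exact Hs|].
      replace (s * (M / s * q ^ S k)) with (M * q ^ S k) by (field; lra).
      eapply Rle_trans; [|exact Hb].
      replace (A * s ^ S k) with (s * (A * s ^ k)) by (simpl; ring).
      apply Rmult_le_compat_l; [lra|]. apply Rmult_le_compat_l; [lra | exact Hk]. }
    assert (0 <= M / s * q ^ S k).
    { apply (Rmult_le_reg_l s); [exact Hs|]. rewrite Rmult_0_r.
      replace (s * (M / s * q ^ S k)) with (M * q ^ S k) by (field; lra).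
      eapply Rle_trans; [|exact Hb]. apply Rmult_le_pos; [exact HA | apply pow_le; lra]. }
    assert (Hn : INR (S k) <= INR (S (S k)) * INR (S (S (S k))))
      by (rewrite !S_INR; pose proof (pos_INR k); nra).
    replace (M / s * (INR (S (S k)) * INR (S (S (S k))) * q ^ S k))
      with (INR (S (S k)) * INR (S (S (S k))) * (M / s * q ^ S k)) by ring.
    rewrite Rmult_assoc. apply Rle_trans with (INR (S k) * (M / s * q ^ S k)).
    + apply Rmult_le_compat_l; [apply pos_INR | exact Hsk].
    + apply Rmult_le_compat_r; assumption.
Qed.

Lemma remainder_term_bound (A E s M q d : R) n :
  0 < s -> 0 <= A -> 0 <= q -> 0 <= d -> A * s ^ n <= M * q ^ n ->
  s * s * E <= INR n * INR n * s ^ n * (d * d) ->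
  A * E <= M / (s * s) * (INR (S n) * INR (S (S n)) * q ^ n) * (d * d).
Proof.
  intros Hs HA Hq Hd Hb HE. apply (Rmult_le_reg_l (s * s)); [nra|].
  replace (s * s * (M / (s * s) * (INR (S n) * INR (S (S n)) * q ^ n) * (d * d)))
    with (INR (S n) * INR (S (S n)) * (M * q ^ n) * (d * d)) by (field; lra).
  assert (Hnn : INR n * INR n <= INR (S n) * INR (S (S n)))
    by (rewrite !S_INR; pose proof (pos_INR n); nra).
  assert (0 <= M * q ^ n) by (eapply Rle_trans; [|exact Hb]; apply Rmult_le_pos; [|apply pow_le]; lra).
  assert (s * s * (A * E) <= INR n * INR n * (A * s ^ n) * (d * d)).
  { replace (s * s * (A * E)) with (A * (s * s * E)) by ring.
    replace (INR n * INR n * (A * s ^ n) * (d * d)) with (A * (INR n * INR n * s ^ n * (d * d))) by ring.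
    apply Rmult_le_compat_l; assumption. }
  eapply Rle_trans; [eassumption|].
  apply Rmult_le_compat_r; [nra|]. pose proof (pos_INR n).
  apply Rmult_le_compat; [nra | apply Rmult_le_pos; [|apply pow_le]; lra | exact Hnn | exact Hb].
Qed.

Section TermwiseDerivative.

Variables (a : nat -> C) (f : C -> C).
Hypothesis Hf : forall w, Cmod w < 1 -> is_seriesC (fun n => a n * w ^ n)%C (f w).

Lemma power_series_geometric_bound s :
  0 <= s < 1 -> exists M q, 0 <= M /\ 0 <= q < 1 /\ forall n, Cmod (a n) * s ^ n <= M * q ^ n.
Proof.
  intros Hs. set (t := (1 + s) / 2).
  assert (Ht : Cmod t < 1) by (rewrite Cmod_R, Rabs_pos_eq; unfold t; lra).
  destruct (coef_geometric_decay a t _ ltac:(unfold t; lra) (Hf t Ht) s (proj1 Hs)) as [M [HM Hb]].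
  exists M, (s / t). repeat split; auto.
  - apply Rdiv_le_0_compat; unfold t; lra.
  - apply Rlt_div_l; unfold t; lra.
Qed.

Lemma is_derive_power_series z : Cmod z < 1 -> exists l,
  is_seriesC (fun n => INR n * a n * z ^ pred n)%C l /\
  is_derive (K := C_AbsRing) (V := C_NormedModule) f z l.
Proof.
  intros Hz. set (rho := Cmod z) in *. assert (Hrho : 0 <= rho) by apply Cmod_ge_0.
  set (s := (1 + rho) / 2). assert (Hs : 0 < s < 1) by (unfold s; lra).
  destruct (power_series_geometric_bound s ltac:(lra)) as [M [q [HM [Hq Hb]]]].
  set (w := fun n => INR (S n) * INR (S (S n)) * q ^ n).
  assert (Hw : ex_series w) by exact (ex_series_succ_succ_pow q Hq).
  assert (Hderiv : ex_series (K := C_AbsRing) (V := C_CompleteNormedModule)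
                     (fun n => INR n * a n * z ^ pred n)%C).
  { apply (ex_series_le (K := C_AbsRing) (V := C_CompleteNormedModule) _ (fun n => M / s * w n)).
    - intros n. change (Cmod (INR n * a n * z ^ pred n)%C <= M / s * w n).
      rewrite !Cmod_mult, Cmod_pow, Cmod_R, Rabs_pos_eq by apply pos_INR.
      apply derivative_term_bound; try apply Cmod_ge_0; try apply Hb; unfold s, rho in *; lra.
    - apply (ex_series_scal (K := R_AbsRing) (V := R_NormedModule) (M / s)), Hw. }
  destruct Hderiv as [l Hl]. exists l. split; [exact Hl|].
  apply (is_derive_of_quadratic_remainder f z l (s - rho) (M / (s * s) * Series w)); [unfold s; lra|].
  intros y Hy. set (d := Cmod (y - z)) in *.
  assert (Hys : Cmod y <= s).
  { replace y with (z + (y - z))%C by ring. eapply Rle_trans; [apply Cmod_triangle|]. fold rho d. lra. }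
  assert (Hrem : is_seriesC (fun n => a n * pow_lin_rem y z n)%C (f y - f z - (y - z) * l)%C).
  { pose proof (is_series_minus _ _ _ _ (is_series_minus _ _ _ _ (Hf y ltac:(unfold s in *; lra)) (Hf z Hz))
                  (is_series_scal (K := C_AbsRing) (V := C_NormedModule) (y - z)%C _ _ Hl)) as H.
    revert H. apply is_series_ext. intros n. unfold pow_lin_rem.
    change ((a n * y ^ n + - (a n * z ^ n)) + - ((y - z) * (INR n * a n * z ^ pred n)) =
            a n * (y ^ n - z ^ n - INR n * z ^ pred n * (y - z)))%C.
    ring. }
  apply (is_seriesC_Cmod_le _ _ (fun n => M / (s * s) * w n * (d * d)) _ Hrem).
  - intros n. rewrite Cmod_mult.
    apply remainder_term_bound; try apply Cmod_ge_0; try apply Hb; try lra.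
    apply pow_lin_rem_bound; [lra | exact Hys | unfold s, rho in *; lra].
  - replace (M / (s * s) * Series w * (d * d)) with (Series w * (M / (s * s) * (d * d))) by ring.
    eapply is_series_ext; [|apply (is_series_scal_r (M / (s * s) * (d * d))), Series_correct, Hw].
    intros n. simpl. ring.
Qed.

End TermwiseDerivative.

(* The Taylor coefficients of [beta f(z)/z + (1 - beta) f'(z)] when [f = sum a_n z^n]. *)
Definition carath_coef (a : nat -> C) (beta : R) (j : nat) : C :=
  (a (S j) * RtoC (INR (S j) - INR j * beta))%C.

Lemma is_seriesC_carath (a : nat -> C) (F L z : C) (beta : R) :
  a 0%nat = RtoC 0 -> z <> RtoC 0 ->
  is_seriesC (fun n => a n * z ^ n)%C F ->
  is_seriesC (fun n => INR n * a n * z ^ pred n)%C L ->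
  is_seriesC (fun j => carath_coef a beta j * z ^ j)%C (beta * (F / z) + RtoC (1 - beta) * L)%C.
Proof.
  intros Ha0 Hz HF HL.
  assert (HF1 : is_seriesC (fun k => a (S k) * z ^ S k)%C F).
  { apply (is_series_incr_1 (K := C_AbsRing) (V := C_NormedModule) (fun n => a n * z ^ n)%C).
    match goal with |- is_series _ ?X => replace X with F; [exact HF|] end.
    rewrite Ha0. change (F = F + 0 * z ^ 0)%C. ring. }
  assert (HL1 : is_seriesC (fun k => INR (S k) * a (S k) * z ^ k)%C L).
  { apply (is_series_incr_1 (K := C_AbsRing) (V := C_NormedModule)
             (fun n => INR n * a n * z ^ pred n)%C).
    match goal with |- is_series _ ?X => replace X with L; [exact HL|] end.
    rewrite Ha0. change (L = L + INR 0 * 0 * z ^ pred 0)%C. ring. }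
  pose proof (is_series_plus _ _ _ _
    (is_series_scal (K := C_AbsRing) (V := C_NormedModule) (beta / z)%C _ _ HF1)
    (is_series_scal (K := C_AbsRing) (V := C_NormedModule) (RtoC (1 - beta)) _ _ HL1)) as H.
  replace (beta * (F / z) + RtoC (1 - beta) * L)%C
    with (plus (scal (beta / z)%C F) (scal (RtoC (1 - beta)) L)).
  2: { change (beta / z * F + RtoC (1 - beta) * L = beta * (F / z) + RtoC (1 - beta) * L)%C.
       field. exact Hz. }
  revert H. apply is_series_ext. intros n. unfold carath_coef.
  change (beta / z * (a (S n) * z ^ S n) + RtoC (1 - beta) * (INR (S n) * a (S n) * z ^ n) =
          a (S n) * RtoC (INR (S n) - INR n * beta) * z ^ n)%C.
  rewrite !S_INR, !RtoC_minus, !RtoC_plus, !RtoC_mult. simpl Cpow. field. exact Hz.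
Qed.

(** * Roots of unity *)

Fixpoint csum (m : nat) (f : nat -> C) : C :=
  match m with O => RtoC 0 | S n => (csum n f + f n)%C end.

Lemma csum_ext m f g : (forall k, (k < m)%nat -> f k = g k) -> csum m f = csum m g.
Proof. induction m; intros H; simpl; auto. rewrite IHm, H; auto. Qed.

Lemma csum_plus m f g : csum m (fun k => f k + g k)%C = (csum m f + csum m g)%C.
Proof. induction m; simpl; [ring|]. rewrite IHm. ring. Qed.

Lemma csum_scal m c f : csum m (fun k => c * f k)%C = (c * csum m f)%C.
Proof. induction m; simpl; [ring|]. rewrite IHm. ring. Qed.

Lemma csum_const_1 m : csum m (fun _ => RtoC 1) = RtoC (INR m).
Proof. induction m; simpl csum; [reflexivity|]. now rewrite IHm, S_INR, RtoC_plus. Qed.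

Lemma csum_geom m u : (csum m (fun k => u ^ k) * (u - 1))%C = (u ^ m - 1)%C.
Proof. induction m; simpl; [ring|]. rewrite Cmult_plus_distr_r, IHm. ring. Qed.

Lemma is_seriesC_csum m (g : nat -> nat -> C) (G : nat -> C) :
  (forall k, (k < m)%nat -> is_seriesC (g k) (G k)) ->
  is_seriesC (fun j => csum m (fun k => g k j)) (csum m G).
Proof.
  induction m; intros H; simpl.
  - pose proof (is_seriesC_finite (fun _ => RtoC 0) 0 (fun _ _ => eq_refl)) as H0.
    now rewrite sum_nC_O in H0.
  - exact (is_series_plus _ _ _ _ (IHm (fun k hk => H k ltac:(lia))) (H m ltac:(lia))).
Qed.

Lemma Re_csum_ge_0 m f : (forall k, (k < m)%nat -> 0 <= Re (f k)) -> 0 <= Re (csum m f).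
Proof.
  induction m; intros H; simpl csum; [simpl; lra|].
  rewrite re_plus. pose proof (H m ltac:(lia)). pose proof (IHm (fun k hk => H k ltac:(lia))). lra.
Qed.

Definition root_unity (m : nat) : C := (cos (2 * PI / INR m), sin (2 * PI / INR m)).

Lemma root_unity_pow m k :
  (root_unity m ^ k)%C = (cos (INR k * (2 * PI / INR m)), sin (INR k * (2 * PI / INR m))).
Proof.
  induction k.
  - simpl. now rewrite Rmult_0_l, cos_0, sin_0.
  - rewrite Cpow_S, IHk. unfold root_unity. rewrite S_INR.
    replace ((INR k + 1) * (2 * PI / INR m)) with (INR k * (2 * PI / INR m) + 2 * PI / INR m) by ring.
    rewrite cos_plus, sin_plus. unfold Cmult. simpl. f_equal; ring.
Qed.

Lemma Cmod_root_unity_pow m k : Cmod (root_unity m ^ k)%C = 1.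
Proof.
  rewrite root_unity_pow. unfold Cmod. simpl. rewrite !Rmult_1_r.
  pose proof (sin2_cos2 (INR k * (2 * PI / INR m))) as H. unfold Rsqr in H.
  rewrite Rplus_comm, H. apply sqrt_1.
Qed.

Lemma root_unity_pow_m m : (0 < m)%nat -> (root_unity m ^ m)%C = RtoC 1.
Proof.
  intros Hm. rewrite root_unity_pow. replace (INR m * (2 * PI / INR m)) with (2 * PI).
  - now rewrite cos_2PI, sin_2PI.
  - field. apply not_0_INR. lia.
Qed.

Lemma root_unity_pow_neq_1 m n : (0 < n < m)%nat -> (root_unity m ^ n)%C <> RtoC 1.
Proof.
  intros Hn Heq. rewrite root_unity_pow in Heq. injection Heq as Hc _.
  set (x := INR n * (2 * PI / INR m)) in *.
  assert (Hx : 0 < x / 2 < PI).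
  { unfold x. assert (0 < INR n) by (apply lt_0_INR; lia).
    assert (INR n < INR m) by (apply lt_INR; lia). pose proof PI_RGT_0.
    replace (INR n * (2 * PI / INR m) / 2) with (PI * (INR n / INR m)) by (field; lra).
    split; [apply Rmult_lt_0_compat; [lra | apply Rdiv_lt_0_compat; lra]|].
    rewrite <- (Rmult_1_r PI) at 2. apply Rmult_lt_compat_l; [lra|].
    apply Rlt_div_l; lra. }
  pose proof (sin_gt_0 _ (proj1 Hx) (proj2 Hx)).
  replace x with (2 * (x / 2)) in Hc by field. rewrite cos_2a_sin in Hc. nra.
Qed.

Lemma sum_root_unity_pow m N : (0 < m)%nat ->
  csum m (fun k => (root_unity m ^ k) ^ N)%C =
  if (N mod m =? 0)%nat then RtoC (INR m) else RtoC 0.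
Proof.
  intros Hm. set (u := (root_unity m ^ N)%C).
  rewrite (csum_ext m _ (fun k => u ^ k)%C)
    by (intros k _; unfold u; rewrite <- !Cpow_mult_r, Nat.mul_comm; reflexivity).
  assert (Hu : u = (root_unity m ^ (N mod m))%C).
  { unfold u. rewrite (Nat.div_mod_eq N m) at 1.
    rewrite Cpow_add_r, Cpow_mult_r, root_unity_pow_m, Cpow_1_l by auto. ring. }
  destruct (Nat.eqb_spec (N mod m) 0) as [h|h].
  - rewrite (csum_ext m _ (fun _ => RtoC 1)); [apply csum_const_1|].
    intros k _. rewrite Hu, h. apply Cpow_1_l.
  - assert (Hne : (u - 1)%C <> RtoC 0).
    { intros H0. apply (root_unity_pow_neq_1 m (N mod m)).
      + split; [lia | apply Nat.mod_upper_bound; lia].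
      + rewrite <- Hu. now apply Ceq_minus. }
    assert (Hum : (u ^ m)%C = RtoC 1).
    { unfold u. rewrite <- Cpow_mult_r, Nat.mul_comm, Cpow_mult_r, root_unity_pow_m by auto.
      apply Cpow_1_l. }
    pose proof (csum_geom m u) as G. rewrite Hum in G.
    set (S := csum m _) in *. clearbody S.
    replace S with (S * (u - 1) / (u - 1))%C by (field; auto).
    rewrite G. C_eq. field. auto.
Qed.

Lemma Cconj_root_unity_pow m k : (0 < m)%nat ->
  Cconj (root_unity m ^ k)%C = ((root_unity m ^ k) ^ (m - 1))%C.
Proof.
  intros Hm. set (u := (root_unity m ^ k)%C).
  assert (H1 : (u ^ (m - 1) * u)%C = RtoC 1).
  { replace (u ^ (m - 1) * u)%C with (u ^ S (m - 1))%C by (simpl; ring).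
    replace (S (m - 1)) with m by lia.
    unfold u. rewrite <- Cpow_mult_r, Nat.mul_comm, Cpow_mult_r, root_unity_pow_m by auto.
    apply Cpow_1_l. }
  assert (H2 : (u * Cconj u)%C = RtoC 1).
  { rewrite <- Cmod2_conj. unfold u. rewrite Cmod_root_unity_pow. simpl. f_equal; ring. }
  transitivity (Cconj u * (u ^ (m - 1) * u))%C; [rewrite H1; ring|].
  transitivity (u * Cconj u * u ^ (m - 1))%C; [ring|]. rewrite H2. ring.
Qed.

(** * The Caratheodory-Toeplitz inequality *)

Definition mod_indicator (m N : nat) : C := if (N mod m =? 0)%nat then RtoC 1 else RtoC 0.

Lemma mod_neq_0_between m N k : (0 < m)%nat -> (k * m < N < (k + 1) * m)%nat -> (N mod m =? 0)%nat = false.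
Proof.
  intros Hm HN. apply Nat.eqb_neq. intros H.
  apply Nat.Div0.mod_divides in H as [q Hq].
  assert (q <= k \/ k + 1 <= q)%nat as [h|h] by lia.
  - assert (m * q <= m * k)%nat by (apply Nat.mul_le_mono_l; auto). lia.
  - assert (m * (k + 1) <= m * q)%nat by (apply Nat.mul_le_mono_l; auto). lia.
Qed.

Lemma mod_indicator_small m j a b : (5 <= m)%nat -> (j + 2 < m)%nat -> (a <= 2)%nat -> (b <= 2)%nat ->
  mod_indicator m (j + a + (m - 1) * b) = if (j + a =? b)%nat then RtoC 1 else RtoC 0.
Proof.
  intros Hm Hj Ha Hb. unfold mod_indicator.
  destruct (Nat.eqb_spec (j + a) b) as [h|h].
  - replace (j + a + (m - 1) * b)%nat with (b * m)%nat by (rewrite h; destruct m; [lia|]; simpl; nia).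
    now rewrite Nat.Div0.mod_mul.
  - assert (j + a < b \/ b < j + a)%nat as [h2|h2] by lia.
    + rewrite (mod_neq_0_between m _ (b - 1)); [reflexivity | lia|].
      destruct b; [lia|]. destruct m; [lia|]. simpl. nia.
    + rewrite (mod_neq_0_between m _ b); [reflexivity | lia|].
      destruct m; [lia|]. simpl. nia.
Qed.

(* The mean of [w^j (x0 + x1 w + x2 w^2) (y0 + y1 / w + y2 / w^2)] over the [m]-th roots of
   unity [w] (see [csum_root_unity_averaged]). *)
Definition averaged_coef (m : nat) (x0 x1 x2 y0 y1 y2 : C) (j : nat) : C :=
  (x0 * y0 * mod_indicator m (j + 0 + (m - 1) * 0) + x0 * y1 * mod_indicator m (j + 0 + (m - 1) * 1)
 + x0 * y2 * mod_indicator m (j + 0 + (m - 1) * 2) + x1 * y0 * mod_indicator m (j + 1 + (m - 1) * 0)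
 + x1 * y1 * mod_indicator m (j + 1 + (m - 1) * 1) + x1 * y2 * mod_indicator m (j + 1 + (m - 1) * 2)
 + x2 * y0 * mod_indicator m (j + 2 + (m - 1) * 0) + x2 * y1 * mod_indicator m (j + 2 + (m - 1) * 1)
 + x2 * y2 * mod_indicator m (j + 2 + (m - 1) * 2))%C.

Lemma averaged_coef_0 m x0 x1 x2 y0 y1 y2 : (5 <= m)%nat ->
  averaged_coef m x0 x1 x2 y0 y1 y2 0 = (x0 * y0 + x1 * y1 + x2 * y2)%C.
Proof. intros Hm. unfold averaged_coef. rewrite !mod_indicator_small by lia. cbn [Nat.eqb Nat.add]. ring. Qed.

Lemma averaged_coef_1 m x0 x1 x2 y0 y1 y2 : (5 <= m)%nat ->
  averaged_coef m x0 x1 x2 y0 y1 y2 1 = (x0 * y1 + x1 * y2)%C.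
Proof. intros Hm. unfold averaged_coef. rewrite !mod_indicator_small by lia. cbn [Nat.eqb Nat.add]. ring. Qed.

Lemma averaged_coef_2 m x0 x1 x2 y0 y1 y2 : (5 <= m)%nat ->
  averaged_coef m x0 x1 x2 y0 y1 y2 2 = (x0 * y2)%C.
Proof. intros Hm. unfold averaged_coef. rewrite !mod_indicator_small by lia. cbn [Nat.eqb Nat.add]. ring. Qed.

Lemma averaged_coef_mid m x0 x1 x2 y0 y1 y2 j : (5 <= m)%nat -> (3 <= j)%nat -> (j + 2 < m)%nat ->
  averaged_coef m x0 x1 x2 y0 y1 y2 j = RtoC 0.
Proof.
  intros Hm Hj Hjm. unfold averaged_coef. rewrite !mod_indicator_small by lia.
  repeat match goal with |- context [(?x =? ?y)%nat] => destruct (Nat.eqb_spec x y); [lia|] end.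
  C_eq. ring.
Qed.

Lemma Cmod_averaged_coef_le m x0 x1 x2 y0 y1 y2 j :
  Cmod (averaged_coef m x0 x1 x2 y0 y1 y2 j) <=
  (Cmod x0 + Cmod x1 + Cmod x2) * (Cmod y0 + Cmod y1 + Cmod y2).
Proof.
  assert (Hterm : forall x y N, Cmod (x * y * mod_indicator m N)%C <= Cmod x * Cmod y).
  { intros x y N. rewrite !Cmod_mult. unfold mod_indicator. destruct (N mod m =? 0)%nat.
    - rewrite Cmod_1. lra.
    - rewrite Cmod_0. pose proof (Cmod_ge_0 x). pose proof (Cmod_ge_0 y). nra. }
  assert (Hplus : forall u v U V, Cmod u <= U -> Cmod v <= V -> Cmod (u + v)%C <= U + V).
  { intros. eapply Rle_trans; [apply Cmod_triangle | lra]. }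
  eapply Rle_trans; [unfold averaged_coef; repeat apply Hplus; apply Hterm | right; ring].
Qed.

Definition trig3 (m : nat) (x0 x1 x2 : C) (k : nat) : C :=
  (x0 + x1 * root_unity m ^ k + x2 * (root_unity m ^ k) ^ 2)%C.

Definition trig3_rev (m : nat) (y0 y1 y2 : C) (k : nat) : C :=
  (y0 + y1 * (root_unity m ^ k) ^ (m - 1) + y2 * ((root_unity m ^ k) ^ (m - 1)) ^ 2)%C.

Lemma trig3_rev_conj m x0 x1 x2 k : (0 < m)%nat ->
  trig3_rev m (Cconj x0) (Cconj x1) (Cconj x2) k = Cconj (trig3 m x0 x1 x2 k).
Proof.
  intros Hm. unfold trig3_rev, trig3.
  now rewrite !Cplus_conj, !Cmult_conj, (Cpow_conj _ 2), Cconj_root_unity_pow.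
Qed.

Lemma csum_root_unity_averaged m x0 x1 x2 y0 y1 y2 (c : C) (r : R) j : (0 < m)%nat ->
  csum m (fun k => c * (r * root_unity m ^ k) ^ j * (trig3 m x0 x1 x2 k * trig3_rev m y0 y1 y2 k))%C
  = (c * r ^ j * INR m * averaged_coef m x0 x1 x2 y0 y1 y2 j)%C.
Proof.
  intros Hm. set (T := fun N => csum m (fun k => (root_unity m ^ k) ^ N)%C).
  assert (HT : forall N, T N = (INR m * mod_indicator m N)%C).
  { intros N. unfold T. rewrite sum_root_unity_pow by auto. unfold mod_indicator.
    destruct (N mod m =? 0)%nat; C_eq; ring. }
  transitivity (c * r ^ j *
   (x0 * y0 * T (j + 0 + (m - 1) * 0)%nat + x0 * y1 * T (j + 0 + (m - 1) * 1)%nat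
  + x0 * y2 * T (j + 0 + (m - 1) * 2)%nat + x1 * y0 * T (j + 1 + (m - 1) * 0)%nat
  + x1 * y1 * T (j + 1 + (m - 1) * 1)%nat + x1 * y2 * T (j + 1 + (m - 1) * 2)%nat
  + x2 * y0 * T (j + 2 + (m - 1) * 0)%nat + x2 * y1 * T (j + 2 + (m - 1) * 1)%nat
  + x2 * y2 * T (j + 2 + (m - 1) * 2)%nat))%C.
  2: { rewrite !HT. unfold averaged_coef. ring. }
  unfold T. rewrite <- !csum_scal, <- !csum_plus, <- csum_scal.
  apply csum_ext. intros k _. rewrite !Cpow_add_r, !Cpow_mult_r. unfold trig3, trig3_rev.
  rewrite Cpow_mult_l. simpl Cpow. ring.
Qed.

(* Twice its real part is the Hermitian form in [(x0, x1, x2)] of the Toeplitz matrix with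
   first row [(2, A, B)]. *)
Definition toeplitz3 (A B x0 x1 x2 : C) : C :=
  (x0 * Cconj x0 + x1 * Cconj x1 + x2 * Cconj x2
   + A * (x0 * Cconj x1 + x1 * Cconj x2) + B * (x0 * Cconj x2))%C.

Lemma pow_antimono (s : R) n j : 0 <= s <= 1 -> (n <= j)%nat -> s ^ j <= s ^ n.
Proof.
  intros Hs Hnj. replace j with (n + (j - n))%nat by lia. rewrite pow_add.
  assert (0 <= s ^ n) by (apply pow_le; lra).
  assert (s ^ (j - n) <= 1) by (rewrite <- (pow1 (j - n)); apply pow_incr; lra).
  assert (0 <= s ^ (j - n)) by (apply pow_le; lra). nra.
Qed.

Lemma Rle_0_of_pow_lower_bounds (X E sg : R) N0 :
  0 <= E -> 0 <= sg < 1 -> (forall N, (N0 <= N)%nat -> - (E * sg ^ N) <= X) -> 0 <= X.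
Proof.
  intros HE Hsg Hlow. destruct (Rle_dec 0 X) as [|HX]; [assumption|]. exfalso.
  assert (Hy : 0 < - X / (E + 1)) by (apply Rdiv_lt_0_compat; lra).
  destruct (pow_lt_1_zero sg ltac:(rewrite Rabs_pos_eq; lra) _ Hy) as [N HN].
  set (n := Nat.max N N0). specialize (HN n ltac:(lia)). specialize (Hlow n ltac:(lia)).
  rewrite Rabs_pos_eq in HN by (apply pow_le; lra).
  assert (E * sg ^ n <= E * (- X / (E + 1))) by (apply Rmult_le_compat_l; lra).
  assert (E * (- X / (E + 1)) < - X).
  { apply (Rmult_lt_reg_r (E + 1)); [lra|].
    replace (E * (- X / (E + 1)) * (E + 1)) with (E * - X) by (field; lra). nra. }
  lra.
Qed.

Definition sum3_Cmod (x0 x1 x2 : C) : R := Cmod x0 + Cmod x1 + Cmod x2.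

Lemma sum3_Cmod_ge_0 x0 x1 x2 : 0 <= sum3_Cmod x0 x1 x2.
Proof.
  unfold sum3_Cmod. pose proof (Cmod_ge_0 x0). pose proof (Cmod_ge_0 x1). pose proof (Cmod_ge_0 x2). lra.
Qed.

Section CaratheodoryToeplitz.

Variables (c : nat -> C) (G : C -> C).
Hypothesis Hc0 : c 0%nat = RtoC 1.
Hypothesis HG : forall z, 0 < Cmod z < 1 -> is_seriesC (fun j => c j * z ^ j)%C (G z) /\ 0 < Re (G z).

Let W m x0 x1 x2 := averaged_coef m x0 x1 x2 (Cconj x0) (Cconj x1) (Cconj x2).

(* [V] is the mean of [G (r w) |x0 + x1 w + x2 w^2|^2] over the [m]-th roots of unity [w]. *)
Lemma averaged_series_Re_nonneg (r : R) x0 x1 x2 m : 0 < r < 1 -> (0 < m)%nat ->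
  exists V, 0 <= Re V /\ is_seriesC (fun j => c j * r ^ j * W m x0 x1 x2 j)%C V.
Proof.
  intros Hr Hm. set (z := fun k => (r * root_unity m ^ k)%C).
  assert (Hz : forall k, 0 < Cmod (z k) < 1).
  { intros k. unfold z. rewrite Cmod_mult, Cmod_root_unity_pow, Cmod_R, Rabs_pos_eq; lra. }
  set (P := fun k => (trig3 m x0 x1 x2 k * trig3_rev m (Cconj x0) (Cconj x1) (Cconj x2) k)%C).
  set (Tot := csum m (fun k => G (z k) * P k)%C).
  exists (Tot * RtoC (/ INR m))%C. split.
  - rewrite re_scal_r. apply Rmult_le_pos; [|apply Rlt_le, Rinv_0_lt_compat, lt_0_INR; lia].
    apply Re_csum_ge_0. intros k _. unfold P. rewrite trig3_rev_conj, <- Cmod2_conj, re_scal_r by auto.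
    apply Rmult_le_pos; [apply Rlt_le, (HG (z k) (Hz k)) | apply pow_le, Cmod_ge_0].
  - assert (Hsum : is_seriesC (fun j => csum m (fun k => c j * z k ^ j * P k))%C Tot).
    { apply is_seriesC_csum. intros k _.
      pose proof (is_series_scal (K := C_AbsRing) (V := C_NormedModule) (P k) _ _
                    (proj1 (HG (z k) (Hz k)))) as H.
      replace (G (z k) * P k)%C with (scal (P k) (G (z k))) by (C_eq; apply Cmult_comm).
      revert H. apply is_series_ext. intros j. C_eq. change (P k * (c j * z k ^ j) = c j * z k ^ j * P k)%C.
      ring. }
    pose proof (is_series_scal (K := C_AbsRing) (V := C_NormedModule) (RtoC (/ INR m)) _ _ Hsum) as H.
    replace (Tot * RtoC (/ INR m))%C with (scal (RtoC (/ INR m)) Tot) by (C_eq; apply Cmult_comm).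
    revert H. apply is_series_ext. intros j.
    change (RtoC (/ INR m) * csum m (fun k => c j * z k ^ j * P k) = c j * r ^ j * W m x0 x1 x2 j)%C.
    unfold z, P. rewrite csum_root_unity_averaged by auto. unfold W.
    assert (INR m <> 0) by (apply not_0_INR; lia).
    rewrite RtoC_inv by auto. field. intros Heq. apply RtoC_inj in Heq. auto.
Qed.

Lemma averaged_series_head r x0 x1 x2 m : (5 <= m)%nat ->
  sum_nC (fun j => c j * r ^ j * W m x0 x1 x2 j)%C 2 = toeplitz3 (c 1%nat * r) (c 2%nat * r ^ 2) x0 x1 x2.
Proof.
  intros Hm. rewrite !sum_nC_S, sum_nC_O. unfold W.
  rewrite averaged_coef_0, averaged_coef_1, averaged_coef_2, Hc0 by auto.
  unfold toeplitz3. simpl. C_eq. ring.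
Qed.

Lemma averaged_series_tail_bound r x0 x1 x2 m M sg j :
  0 < r -> 0 <= M -> 0 <= sg <= 1 -> (5 <= m)%nat ->
  (forall j, Cmod (c j) * r ^ j <= M * sg ^ j * sg ^ j) ->
  Cmod (if (j <=? 2)%nat then RtoC 0 else c j * r ^ j * W m x0 x1 x2 j)%C
  <= sum3_Cmod x0 x1 x2 * sum3_Cmod x0 x1 x2 * M * sg ^ (m - 2) * sg ^ j.
Proof.
  intros Hr HM Hsg Hm HcM. set (B := sum3_Cmod x0 x1 x2 * sum3_Cmod x0 x1 x2).
  assert (HB : 0 <= B) by (apply Rmult_le_pos; apply sum3_Cmod_ge_0).
  assert (0 <= sg ^ (m - 2)) by (apply pow_le; lra). assert (0 <= sg ^ j) by (apply pow_le; lra).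
  assert (Hpos : 0 <= B * M * sg ^ (m - 2) * sg ^ j) by (apply Rmult_le_pos; [apply Rmult_le_pos; [apply Rmult_le_pos|]|]; lra).
  destruct (Nat.leb_spec j 2) as [Hhead|Htail]; [rewrite Cmod_0; exact Hpos|].
  destruct (Nat.le_gt_cases (m - 2) j) as [Hfar|Hnear].
  - rewrite !Cmod_mult, Cmod_pow, Cmod_R, Rabs_pos_eq by lra.
    assert (HW : Cmod (W m x0 x1 x2 j) <= B).
    { unfold W. eapply Rle_trans; [apply Cmod_averaged_coef_le|]. now rewrite !Cmod_conj. }
    assert (Hc : Cmod (c j) * r ^ j <= M * sg ^ (m - 2) * sg ^ j).
    { eapply Rle_trans; [apply HcM|]. rewrite !Rmult_assoc. apply Rmult_le_compat_l; [lra|].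
      apply Rmult_le_compat_r; [lra | apply pow_antimono; [lra | lia]]. }
    replace (B * M * sg ^ (m - 2) * sg ^ j) with ((M * sg ^ (m - 2) * sg ^ j) * B) by ring.
    apply Rmult_le_compat; try lra; try apply Cmod_ge_0.
    apply Rmult_le_pos; [apply Cmod_ge_0 | apply pow_le; lra].
  - unfold W. rewrite averaged_coef_mid, Cmult_0_r, Cmod_0 by lia. exact Hpos.
Qed.

Lemma toeplitz3_lower_bound (r M sg : R) x0 x1 x2 m :
  0 < r < 1 -> 0 <= M -> 0 <= sg < 1 -> (5 <= m)%nat ->
  (forall j, Cmod (c j) * r ^ j <= M * sg ^ j * sg ^ j) ->
  - (sum3_Cmod x0 x1 x2 * sum3_Cmod x0 x1 x2 * M / (1 - sg) * sg ^ (m - 2))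
  <= Re (toeplitz3 (c 1%nat * r) (c 2%nat * r ^ 2) x0 x1 x2).
Proof.
  intros Hr HM Hsg Hm HcM. set (B := sum3_Cmod x0 x1 x2 * sum3_Cmod x0 x1 x2).
  set (Q := toeplitz3 (c 1%nat * r) (c 2%nat * r ^ 2) x0 x1 x2).
  set (u := fun j => (c j * r ^ j * W m x0 x1 x2 j)%C).
  destruct (averaged_series_Re_nonneg r x0 x1 x2 m Hr ltac:(lia)) as [V [HV Hu]].
  assert (Htail : is_seriesC (fun j => if (j <=? 2)%nat then RtoC 0 else u j) (V - Q)%C).
  { pose proof (is_seriesC_finite (fun j => if (j <=? 2)%nat then u j else RtoC 0) 2) as Hhead.
    replace (sum_nC _ 2) with Q in Hhead.
    2: { unfold Q. rewrite <- (averaged_series_head r x0 x1 x2 m Hm), !sum_nC_S, !sum_nC_O. reflexivity. }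
    specialize (Hhead ltac:(intros n Hn; destruct (Nat.leb_spec n 2); [lia | reflexivity])).
    pose proof (is_series_minus _ _ _ _ Hu Hhead) as H.
    revert H. apply is_series_ext. intros j. destruct (j <=? 2)%nat; C_eq;
      [change (u j + - u j = 0)%C | change (u j + - 0 = u j)%C]; ring. }
  assert (Hgeom : is_series (fun j => B * M * sg ^ (m - 2) * sg ^ j) (B * M * sg ^ (m - 2) * / (1 - sg))).
  { apply (is_series_scal (K := R_AbsRing) (V := R_NormedModule) (B * M * sg ^ (m - 2))).
    apply is_series_geom. rewrite Rabs_pos_eq; lra. }
  pose proof (is_seriesC_Cmod_le _ _ _ _ Htail
                (fun j => averaged_series_tail_bound r x0 x1 x2 m M sg j ltac:(lra) HM ltac:(lra) Hm HcM)
                Hgeom) as Hle.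
  pose proof (re_le_Cmod (V - Q)%C) as Hre. apply Rabs_le_between in Hre.
  unfold Cminus in Hre, Hle. rewrite re_plus, re_opp in Hre.
  unfold Rdiv. fold B.
  replace (B * M * / (1 - sg) * sg ^ (m - 2)) with (B * M * sg ^ (m - 2) * / (1 - sg)) by ring.
  lra.
Qed.

Lemma toeplitz3_carath_nonneg (r : R) x0 x1 x2 : 0 < r < 1 ->
  0 <= Re (toeplitz3 (c 1%nat * r) (c 2%nat * r ^ 2) x0 x1 x2).
Proof.
  intros Hr. set (t := (1 + r) / 2).
  assert (Ht : 0 < Cmod t < 1) by (rewrite Cmod_R, Rabs_pos_eq; unfold t; lra).
  destruct (coef_geometric_decay c t _ ltac:(unfold t; lra) (proj1 (HG t Ht)) r ltac:(lra)) as [M [HM Hdecay]].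
  set (sg := sqrt (r / t)).
  assert (Hrt : 0 <= r / t < 1) by (unfold t; split; [apply Rdiv_le_0_compat | apply Rlt_div_l]; lra).
  assert (Hsg2 : sg * sg = r / t) by (apply sqrt_sqrt; lra).
  assert (Hsg0 : 0 <= sg) by apply sqrt_pos.
  assert (Hsg : 0 <= sg < 1) by nra.
  assert (HcM : forall j, Cmod (c j) * r ^ j <= M * sg ^ j * sg ^ j).
  { intros j. rewrite Rmult_assoc, <- Rpow_mult_distr, Hsg2. apply Hdecay. }
  set (B := sum3_Cmod x0 x1 x2 * sum3_Cmod x0 x1 x2).
  assert (HB : 0 <= B) by (apply Rmult_le_pos; apply sum3_Cmod_ge_0).
  apply (Rle_0_of_pow_lower_bounds _ (B * M / (1 - sg)) sg 3); auto.
  - apply Rdiv_le_0_compat; [apply Rmult_le_pos | ]; lra.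
  - intros N HN.
    pose proof (toeplitz3_lower_bound r M sg x0 x1 x2 (N + 2) Hr HM Hsg ltac:(lia) HcM) as H.
    now replace (N + 2 - 2)%nat with N in H by lia.
Qed.

End CaratheodoryToeplitz.

(* [t] minimizes the form over [x1] when [x0 = e] and [x2 = 1]. *)
Lemma toeplitz3_Re_test_vector a1 a2 b1 b2 e1 e2 :
  let A := (a1, a2) : C in let B := (b1, b2) : C in let e := (e1, e2) : C in
  let t := (RtoC (- / 2) * Cconj (A + Cconj A * Cconj e))%C in
  Re (toeplitz3 A B e t (RtoC 1)) =
  (e1 * e1 + e2 * e2) + 1 - (a1 * a1 + a2 * a2) * (1 + e1 * e1 + e2 * e2) / 4
   + Re ((B - RtoC (/ 2) * (A * A)) * e)%C.
Proof. intros. unfold toeplitz3, A, B, e, t. simpl. field. Qed.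

Lemma toeplitz3_coef_bound (A B : C) : (forall x0 x1 x2, 0 <= Re (toeplitz3 A B x0 x1 x2)) ->
  Cmod (B - RtoC (/ 2) * (A * A))%C <= 2 - Cmod A * Cmod A / 2.
Proof.
  intros HQ. destruct A as [a1 a2], B as [b1 b2].
  assert (HA : Cmod (a1, a2) * Cmod (a1, a2) = a1 * a1 + a2 * a2)
    by (pose proof (Cmod2_alt (a1, a2)) as H; simpl in *; lra).
  rewrite HA.
  destruct ((b1, b2) - RtoC (/ 2) * ((a1, a2) * (a1, a2)))%C as [d1 d2] eqn:HD.
  set (test := fun e => HQ e (RtoC (- / 2) * Cconj ((a1, a2) + Cconj (a1, a2) * Cconj e))%C (RtoC 1)).
  destruct (Req_dec (d1 * d1 + d2 * d2) 0) as [h|h].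
  - assert (d1 = 0 /\ d2 = 0) as [-> ->] by nra.
    pose proof (test (1, 0)) as H. rewrite (toeplitz3_Re_test_vector a1 a2 b1 b2 1 0), HD in H.
    simpl in H. replace (Cmod (0, 0)) with 0 by (symmetry; apply Cmod_0). lra.
  - set (n := Cmod (d1, d2)).
    assert (Hn2 : n * n = d1 * d1 + d2 * d2)
      by (unfold n; pose proof (Cmod2_alt (d1, d2)) as H; simpl in *; lra).
    assert (Hn : 0 < n) by (unfold n; apply Cmod_gt_0; intro H0; injection H0; intros; subst; lra).
    clearbody n.
    (* [e = - conj D / |D|] gives [Re (D e) = - |D|]. *)
    pose proof (test (- d1 / n, d2 / n)) as H.
    rewrite (toeplitz3_Re_test_vector a1 a2 b1 b2 (- d1 / n) (d2 / n)), HD in H. simpl in H.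
    assert (He : - d1 / n * (- d1 / n) + d2 / n * (d2 / n) = 1).
    { replace (- d1 / n * (- d1 / n) + d2 / n * (d2 / n)) with ((d1 * d1 + d2 * d2) / (n * n))
        by (field; lra).
      rewrite <- Hn2. field. lra. }
    assert (Hre : d1 * (- d1 / n) - d2 * (d2 / n) = - n).
    { replace (d1 * (- d1 / n) - d2 * (d2 / n)) with (- (d1 * d1 + d2 * d2) / n) by (field; lra).
      rewrite <- Hn2. field. lra. }
    replace (1 + - d1 / n * (- d1 / n) + d2 / n * (d2 / n)) with 2 in H by lra. lra.
Qed.

Lemma fekete_szego_real_bound (X Z nu : R) : 0 <= X <= 4 ->
  Z <= 2 - X / 2 + Rabs (nu - / 2) * X -> Z <= 2 * Rmax 1 (Rabs (2 * nu - 1)).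
Proof.
  intros HX HZ.
  replace (Rabs (nu - / 2)) with (Rabs (2 * nu - 1) / 2) in HZ.
  2: { replace (2 * nu - 1) with (2 * (nu - / 2)) by field.
       rewrite Rabs_mult, (Rabs_pos_eq 2) by lra. field. }
  set (u := Rabs (2 * nu - 1)) in *. unfold Rmax. destruct (Rle_dec 1 u).
  - assert ((u / 2 - / 2) * X <= (u / 2 - / 2) * 4) by (apply Rmult_le_compat_l; lra). lra.
  - assert ((u / 2 - / 2) * X <= 0) by (apply Rmult_le_0_r; lra). lra.
Qed.

Lemma Rle_of_forall_sqr_scaled (Y K : R) : 0 < K -> (forall r, 0 < r < 1 -> r * r * Y <= K) -> Y <= K.
Proof.
  intros HK Hr. destruct (Rle_dec Y K) as [|HYK]; [assumption|]. exfalso.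
  set (r := sqrt ((1 + K / Y) / 2)).
  assert (Hk : 0 < K / Y < 1) by (split; [apply Rdiv_lt_0_compat | apply Rlt_div_l]; lra).
  assert (Hrr : r * r = (1 + K / Y) / 2) by (apply sqrt_sqrt; lra).
  assert (Hr0 : 0 < r) by (apply sqrt_lt_R0; lra).
  specialize (Hr r ltac:(split; nra)). rewrite Hrr in Hr.
  assert (K / Y * Y = K) by (field; lra).
  assert ((1 + K / Y) / 2 * Y > K / Y * Y) by (apply Rmult_gt_compat_r; lra).
  lra.
Qed.

Lemma caratheodory_fekete_szego (c : nat -> C) (G : C -> C) (nu : R) :
  c 0%nat = RtoC 1 ->
  (forall z, 0 < Cmod z < 1 -> is_seriesC (fun j => c j * z ^ j)%C (G z) /\ 0 < Re (G z)) ->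
  Cmod (c 2%nat - nu * (c 1%nat * c 1%nat))%C <= 2 * Rmax 1 (Rabs (2 * nu - 1)).
Proof.
  intros Hc0 HG. apply Rle_of_forall_sqr_scaled; [pose proof (Rmax_l 1 (Rabs (2 * nu - 1))); lra|].
  intros r Hr. set (A := (c 1%nat * r)%C). set (B := (c 2%nat * r ^ 2)%C).
  pose proof (toeplitz3_coef_bound A B (fun x0 x1 x2 => toeplitz3_carath_nonneg c G Hc0 HG r x0 x1 x2 Hr)) as HD.
  set (X := Cmod A * Cmod A) in *.
  assert (HX : 0 <= X <= 4).
  { pose proof (Cmod_ge_0 (B - RtoC (/ 2) * (A * A))%C).
    split; [unfold X; pose proof (Cmod_ge_0 A); nra | lra]. }
  replace (r * r * Cmod (c 2%nat - nu * (c 1%nat * c 1%nat))%C) with (Cmod (B - nu * (A * A))%C).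
  2: { replace (B - nu * (A * A))%C with (r * r * (c 2%nat - nu * (c 1%nat * c 1%nat)))%C
         by (unfold A, B; simpl; C_eq; ring).
       rewrite Cmod_mult, Cmod_mult, Cmod_R, Rabs_pos_eq by lra. ring. }
  apply (fekete_szego_real_bound X _ nu HX).
  replace (B - nu * (A * A))%C with ((B - RtoC (/ 2) * (A * A)) + RtoC (/ 2 - nu) * (A * A))%C
    by (rewrite RtoC_minus; C_eq; ring).
  eapply Rle_trans; [apply Cmod_triangle|]. rewrite Cmod_mult, Cmod_mult, Cmod_R.
  replace (Rabs (/ 2 - nu)) with (Rabs (nu - / 2)) by (rewrite <- Rabs_Ropp; f_equal; ring).
  fold X. lra.
Qed.

Lemma is_seriesC_of_analytic (f : C -> C) (a : nat -> C) : analytic_on_disk_with_coeffs f a ->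
  forall w, Cmod w < 1 -> is_seriesC (fun n => a n * w ^ n)%C (f w).
Proof.
  intros H w Hw. specialize (H w Hw). revert H. apply is_series_ext.
  intros n. rewrite pow_n_Cpow. C_eq. apply Cmult_comm.
Qed.

Lemma carath_coef_positive_real_part beta f a : in_A beta f a ->
  carath_coef a beta 0 = RtoC 1 /\
  forall z, 0 < Cmod z < 1 ->
    is_seriesC (fun j => carath_coef a beta j * z ^ j)%C
      (beta * (f z / z) + RtoC (1 - beta) * C_derive f z)%C /\
    0 < Re (beta * (f z / z) + RtoC (1 - beta) * C_derive f z)%C.
Proof.
  intros [Han [Ha0 [Ha1 Hder]]]. pose proof (is_seriesC_of_analytic f a Han) as Hf. split.
  - unfold carath_coef. rewrite Ha1. simpl INR. rewrite RtoC_minus, RtoC_mult. C_eq. ring.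
  - intros z Hz. assert (Hz0 : z <> RtoC 0) by (intro h; rewrite h, Cmod_0 in Hz; lra).
    destruct (Hder z (proj2 Hz)) as [l [Hl Hpos]].
    destruct (is_derive_power_series a f Hf z (proj2 Hz)) as [l' [Hl' Hd']].
    assert (Hll : l' = l)
      by (rewrite <- (is_C_derive_unique f z l Hl); exact (eq_sym (is_C_derive_unique f z l' Hd'))).
    rewrite (is_C_derive_unique f z l Hl). rewrite Hll in Hl'.
    split; [|exact (Hpos Hz0)].
    apply is_seriesC_carath; auto. apply Hf. lra.
Qed.

Lemma fs_functional_carath a beta mu : 0 <= beta <= 1 ->
  fs_functional a mu =
  ((carath_coef a beta 2 - RtoC (mu * (3 - 2 * beta) / (2 - beta) ^ 2) * (carath_coef a beta 1 * carath_coef a beta 1))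
   * RtoC (/ (3 - 2 * beta)))%C.
Proof.
  intros Hb. unfold fs_functional, carath_coef.
  replace (INR 3 - INR 2 * beta) with (3 - 2 * beta) by (simpl; ring).
  replace (INR 2 - INR 1 * beta) with (2 - beta) by (simpl; ring).
  assert (RtoC (3 - 2 * beta) <> RtoC 0) by (intro h; apply RtoC_inj in h; lra).
  assert (RtoC (2 - beta) <> RtoC 0) by (intro h; apply RtoC_inj in h; lra).
  rewrite RtoC_inv, RtoC_div, RtoC_mult, RtoC_pow by (try apply pow_nonzero; lra).
  C_eq. field. auto.
Qed.

Lemma fekete_szego_bound_eq beta mu : 0 <= beta <= 1 ->
  2 * Rmax 1 (Rabs (2 * (mu * (3 - 2 * beta) / (2 - beta) ^ 2) - 1)) / (3 - 2 * beta)
  = fekete_szego_bound beta mu.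
Proof.
  intros Hb. set (nu := mu * (3 - 2 * beta) / (2 - beta) ^ 2).
  assert (H2 : 0 < (2 - beta) ^ 2) by (simpl; nra).
  assert (Hnu : forall k, (nu <= k <-> mu * (3 - 2 * beta) <= k * (2 - beta) ^ 2) /\
                          (nu < k <-> mu * (3 - 2 * beta) < k * (2 - beta) ^ 2)).
  { intros k. unfold nu. split; [apply Rle_div_l | apply Rlt_div_l]; lra. }
  unfold fekete_szego_bound, phi. destruct (Rlt_dec mu 0) as [h|h].
  - assert (nu < 0) by (apply Hnu; nra).
    rewrite Rabs_left, Rmax_right by lra. unfold nu. field. lra.
  - destruct (Rle_dec mu ((2 - beta) ^ 2 / (3 - 2 * beta))) as [h2|h2].
    + apply Rle_div_r in h2; [|lra].
      assert (0 <= nu <= 1) by (split; [apply Rdiv_le_0_compat; nra | apply Hnu; lra]).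
      rewrite Rmax_left by (apply Rabs_le; lra). field. lra.
    + assert (1 < nu).
      { apply Rnot_le_lt in h2. apply (Rmult_lt_compat_r (3 - 2 * beta)) in h2; [|lra].
        unfold Rdiv in h2. rewrite Rmult_assoc, Rinv_l, Rmult_1_r in h2 by lra.
        apply Rnot_le_lt. intros Hle. apply Hnu in Hle. lra. }
      rewrite Rabs_right, Rmax_right by lra. unfold nu. field. lra.
Qed.

Lemma fekete_szego_upper_bound beta mu f a : 0 <= beta <= 1 -> in_A beta f a ->
  Cmod (fs_functional a mu) <= fekete_szego_bound beta mu.
Proof.
  intros Hb Hf. destruct (carath_coef_positive_real_part beta f a Hf) as [Hc0 HG].
  rewrite <- fekete_szego_bound_eq, (fs_functional_carath a beta mu Hb) by auto.
  rewrite Cmod_mult, Cmod_R, Rabs_pos_eq by (apply Rlt_le, Rinv_0_lt_compat; lra).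
  apply Rmult_le_compat_r; [apply Rlt_le, Rinv_0_lt_compat; lra|].
  exact (caratheodory_fekete_szego _ _ _ Hc0 HG).
Qed.

(** * Extremal functions *)

Definition seriesC (a : nat -> C) (z : C) : C :=
  iota (fun l : C_CompleteNormedModule => is_seriesC (fun n => a n * z ^ n)%C l).

Lemma seriesC_correct a z l : is_seriesC (fun n => a n * z ^ n)%C l -> seriesC a z = l.
Proof.
  intros H. apply (iota_unique (K := C_AbsRing) (V := C_CompleteNormedModule)); [|exact H].
  intros y Hy. exact (is_seriesC_unique _ _ _ Hy H).
Qed.

(* The function [f] with [beta f(z)/z + (1 - beta) f'(z) = sum_j c_j z^j]: matching coefficients
   gives [a_(j+1) = c_j / (j + 1 - j beta)]. *)
Definition extremal_coef (c : nat -> R) (beta : R) (n : nat) : C :=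
  match n with O => RtoC 0 | S j => RtoC (c j / (INR (S j) - INR j * beta)) end.

Lemma extremal_denominator_ge_1 beta j : 0 <= beta <= 1 -> 1 <= INR (S j) - INR j * beta.
Proof. intros Hb. rewrite S_INR. pose proof (pos_INR j). nra. Qed.

Lemma Cmod_extremal_coef_le c beta n : 0 <= beta <= 1 -> (forall j, 0 <= c j <= 2) ->
  Cmod (extremal_coef c beta n) <= 2.
Proof.
  intros Hb Hc. destruct n as [|j]; unfold extremal_coef; rewrite Cmod_R; [rewrite Rabs_R0; lra|].
  pose proof (extremal_denominator_ge_1 beta j Hb) as Hd. specialize (Hc j).
  rewrite Rabs_pos_eq by (apply Rdiv_le_0_compat; lra).
  apply Rle_div_l; lra.
Qed.

Lemma carath_coef_extremal c beta j : 0 <= beta <= 1 ->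
  carath_coef (extremal_coef c beta) beta j = RtoC (c j).
Proof.
  intros Hb. unfold carath_coef, extremal_coef. pose proof (extremal_denominator_ge_1 beta j Hb).
  rewrite <- RtoC_mult. f_equal. field. lra.
Qed.

Lemma extremal_in_A c beta : 0 <= beta <= 1 -> c 0%nat = 1 -> (forall j, 0 <= c j <= 2) ->
  (forall z, 0 < Cmod z < 1 -> forall V, is_seriesC (fun j => RtoC (c j) * z ^ j)%C V -> 0 < Re V) ->
  in_A beta (seriesC (extremal_coef c beta)) (extremal_coef c beta).
Proof.
  intros Hb Hc0 Hcb Hpos. set (a := extremal_coef c beta).
  assert (Hsum : forall z, Cmod z < 1 -> is_seriesC (fun n => a n * z ^ n)%C (seriesC a z)).
  { intros z Hz.
    assert (H : ex_series (K := C_AbsRing) (V := C_CompleteNormedModule) (fun n => a n * z ^ n)%C).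
    { apply (ex_series_le (K := C_AbsRing) (V := C_CompleteNormedModule) _ (fun n => 2 * Cmod z ^ n)).
      - intros n. change (Cmod (a n * z ^ n)%C <= 2 * Cmod z ^ n).
        rewrite Cmod_mult, Cmod_pow. apply Rmult_le_compat_r; [apply pow_le, Cmod_ge_0|].
        apply Cmod_extremal_coef_le; auto.
      - apply (ex_series_scal (K := R_AbsRing) (V := R_NormedModule) 2), ex_series_geom.
        rewrite Rabs_pos_eq; [lra | apply Cmod_ge_0]. }
    destruct H as [l Hl]. now rewrite (seriesC_correct a z l Hl). }
  split; [|split; [|split]].
  - intros z Hz. specialize (Hsum z Hz). revert Hsum. apply is_series_ext.
    intros n. symmetry. rewrite pow_n_Cpow. C_eq. apply Cmult_comm.
  - reflexivity.
  - unfold a, extremal_coef. f_equal. simpl. rewrite Hc0. field.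
  - intros z Hz. destruct (is_derive_power_series a (seriesC a) Hsum z Hz) as [l [Hl Hd]].
    exists l. split; [exact Hd|]. intros Hz0.
    apply (Hpos z); [split; [apply Cmod_gt_0 |]; auto|].
    pose proof (is_seriesC_carath a (seriesC a z) l z beta eq_refl Hz0 (Hsum z Hz) Hl) as H.
    revert H. apply is_series_ext. intros j. unfold a. now rewrite carath_coef_extremal.
Qed.

Lemma Re_cayley_pos w : Cmod w < 1 -> 0 < Re (2 * / (1 - w) - 1)%C.
Proof.
  intros Hw. destruct w as [x y].
  assert (Hm : x * x + y * y < 1).
  { pose proof (Cmod2_alt (x, y)) as H. simpl in H. pose proof (Cmod_ge_0 (x, y)).
    assert (Cmod (x, y) * Cmod (x, y) < 1) by nra. simpl. lra. }
  assert (Hd : 0 < (1 - x) * (1 - x) + y * y) by nra.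
  replace (Re (2 * / (1 - (x, y)) - 1)%C)
    with ((2 * (1 - x) - ((1 - x) * (1 - x) + y * y)) / ((1 - x) * (1 - x) + y * y)).
  - apply Rdiv_lt_0_compat; nra.
  - unfold Cminus, Cinv, Cmult, Cplus, Copp, Re. simpl. field. nra.
Qed.

Lemma is_seriesC_indicator_0 : is_seriesC (fun j => if (j =? 0)%nat then RtoC 1 else RtoC 0) (RtoC 1).
Proof.
  pose proof (is_seriesC_finite (fun j => if (j =? 0)%nat then RtoC 1 else RtoC 0) 0) as H.
  rewrite sum_nC_O in H. apply H. intros [|n] Hn; [lia | reflexivity].
Qed.

Lemma Cpow_opp z j : ((- z) ^ j)%C = if Nat.even j then (z ^ j)%C else (- z ^ j)%C.
Proof.
  induction j; [reflexivity|].
  rewrite Cpow_S, IHj, Nat.even_succ, <- Nat.negb_even. destruct (Nat.even j); simpl; ring.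
Qed.

(* Taylor coefficients of [(1 + z) / (1 - z)] and of [(1 + z^2) / (1 - z^2)]. *)
Definition half_plane_coef (j : nat) : R := if (j =? 0)%nat then 1 else 2.
Definition half_plane_even_coef (j : nat) : R := if (j =? 0)%nat then 1 else if Nat.even j then 2 else 0.

Lemma is_seriesC_half_plane z : Cmod z < 1 ->
  is_seriesC (fun j => RtoC (half_plane_coef j) * z ^ j)%C (2 * / (1 - z) - 1)%C.
Proof.
  intros Hz. pose proof (is_series_minus _ _ _ _
    (is_series_scal (K := C_AbsRing) (V := C_NormedModule) (RtoC 2) _ _ (is_seriesC_geom z Hz))
    is_seriesC_indicator_0) as H.
  revert H. apply is_series_ext. intros j. unfold half_plane_coef.
  destruct (Nat.eqb_spec j 0) as [->|]; C_eq.
    change (2 * z ^ 0 + - RtoC 1 = 1 * z ^ 0)%C. simpl. ring.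
  - change (2 * z ^ j + - RtoC 0 = 2 * z ^ j)%C. ring.
Qed.

Lemma is_seriesC_half_plane_even z : Cmod z < 1 ->
  is_seriesC (fun j => RtoC (half_plane_even_coef j) * z ^ j)%C (2 * / (1 - z * z) - 1)%C.
Proof.
  intros Hz. assert (Hz' : Cmod (- z)%C < 1) by (rewrite Cmod_opp; lra).
  assert (Hzz : Cmod (z * z)%C < 1) by (rewrite Cmod_mult; pose proof (Cmod_ge_0 z); nra).
  pose proof (is_series_minus _ _ _ _ (is_series_plus _ _ _ _ (is_seriesC_geom z Hz) (is_seriesC_geom _ Hz'))
                is_seriesC_indicator_0) as H.
  replace (2 * / (1 - z * z) - 1)%C with (plus (plus (/ (1 - z))%C (/ (1 - - z))%C) (opp (RtoC 1))).
  2: { pose proof (one_sub_neq_0 z Hz). pose proof (one_sub_neq_0 _ Hz'). pose proof (one_sub_neq_0 _ Hzz).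
       change (/ (1 - z) + / (1 - - z) + - RtoC 1 = 2 * / (1 - z * z) - 1)%C.
       field. auto. }
  revert H. apply is_series_ext. intros j. rewrite Cpow_opp. unfold half_plane_even_coef.
  destruct (Nat.eqb_spec j 0) as [->|].
  { C_eq. change (z ^ 0 + z ^ 0 + - RtoC 1 = RtoC 1 * z ^ 0)%C. simpl. ring. }
  destruct (Nat.even j); C_eq.
  - change (z ^ j + z ^ j + - RtoC 0 = 2 * z ^ j)%C. ring.
  - change (z ^ j + - z ^ j + - RtoC 0 = 0 * z ^ j)%C. ring.
Qed.

Lemma fs_functional_extremal c beta mu : 0 <= beta <= 1 ->
  fs_functional (extremal_coef c beta) mu =
  RtoC (c 2%nat / (3 - 2 * beta) - mu * (c 1%nat / (2 - beta) * (c 1%nat / (2 - beta)))).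
Proof.
  intros Hb. unfold fs_functional, extremal_coef.
  replace (INR 3 - INR 2 * beta) with (3 - 2 * beta) by (simpl; ring).
  replace (INR 2 - INR 1 * beta) with (2 - beta) by (simpl; ring).
  now rewrite RtoC_minus, !RtoC_mult.
Qed.

Lemma fekete_szego_bound_max beta mu : 0 <= beta <= 1 ->
  fekete_szego_bound beta mu = Rmax (2 / (3 - 2 * beta)) (Rabs (phi beta mu)).
Proof.
  intros Hb. rewrite <- fekete_szego_bound_eq by auto.
  set (nu := mu * (3 - 2 * beta) / (2 - beta) ^ 2).
  assert (Hphi : phi beta mu = 2 / (3 - 2 * beta) * - (2 * nu - 1))
    by (unfold phi, nu; field; repeat split; try apply pow_nonzero; lra).
  assert (Hp : 0 <= 2 / (3 - 2 * beta)) by (apply Rlt_le, Rdiv_lt_0_compat; lra).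
  rewrite Hphi, Rabs_mult, Rabs_Ropp, (Rabs_pos_eq (2 / _)) by exact Hp.
  replace (Rmax (2 / (3 - 2 * beta)) (2 / (3 - 2 * beta) * Rabs (2 * nu - 1)))
    with (2 / (3 - 2 * beta) * Rmax 1 (Rabs (2 * nu - 1))) by (rewrite <- RmaxRmult, Rmult_1_r; auto).
  unfold Rdiv. ring.
Qed.

Lemma half_plane_extremal_in_A beta : 0 <= beta <= 1 ->
  in_A beta (seriesC (extremal_coef half_plane_coef beta)) (extremal_coef half_plane_coef beta).
Proof.
  intros Hb. apply extremal_in_A; auto.
  - intros j. unfold half_plane_coef. destruct (j =? 0)%nat; lra.
  - intros z Hz V HV. rewrite (is_seriesC_unique _ _ _ HV (is_seriesC_half_plane z (proj2 Hz))).
    apply Re_cayley_pos. lra.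
Qed.

Lemma half_plane_even_extremal_in_A beta : 0 <= beta <= 1 ->
  in_A beta (seriesC (extremal_coef half_plane_even_coef beta)) (extremal_coef half_plane_even_coef beta).
Proof.
  intros Hb. apply extremal_in_A; auto.
  - intros j. unfold half_plane_even_coef. destruct (j =? 0)%nat; [lra|]. destruct (Nat.even j); lra.
  - intros z Hz V HV. rewrite (is_seriesC_unique _ _ _ HV (is_seriesC_half_plane_even z (proj2 Hz))).
    apply Re_cayley_pos. rewrite Cmod_mult. pose proof (Cmod_ge_0 z). nra.
Qed.

Lemma Cmod_fs_functional_half_plane beta mu : 0 <= beta <= 1 ->
  Cmod (fs_functional (extremal_coef half_plane_coef beta) mu) = Rabs (phi beta mu).
Proof.
  intros Hb. rewrite fs_functional_extremal, Cmod_R by auto. f_equal.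
  unfold phi, half_plane_coef. simpl. field. split; lra.
Qed.

Lemma Cmod_fs_functional_half_plane_even beta mu : 0 <= beta <= 1 ->
  Cmod (fs_functional (extremal_coef half_plane_even_coef beta) mu) = 2 / (3 - 2 * beta).
Proof.
  intros Hb. rewrite fs_functional_extremal, Cmod_R by auto.
  unfold half_plane_even_coef. simpl.
  replace (2 / (3 - 2 * beta) - mu * (0 / (2 - beta) * (0 / (2 - beta)))) with (2 / (3 - 2 * beta))
    by (field; lra).
  apply Rabs_pos_eq, Rlt_le, Rdiv_lt_0_compat; lra.
Qed.

Theorem theorem3p1 (beta mu : R) (hbeta : 0 <= beta <= 1) :
  (forall (f : C -> C) (a : nat -> C), in_A beta f a ->
     Cmod (fs_functional a mu) <= fekete_szego_bound beta mu) /\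
  (exists (f : C -> C) (a : nat -> C), in_A beta f a /\
     Cmod (fs_functional a mu) = fekete_szego_bound beta mu).
Proof.
  split.
  - intros f a Hf. exact (fekete_szego_upper_bound beta mu f a hbeta Hf).
  - rewrite fekete_szego_bound_max by exact hbeta.
    apply Rmax_case.
    + exists (seriesC (extremal_coef half_plane_even_coef beta)), (extremal_coef half_plane_even_coef beta).
      split; [apply half_plane_even_extremal_in_A | apply Cmod_fs_functional_half_plane_even]; exact hbeta.
    + exists (seriesC (extremal_coef half_plane_coef beta)), (extremal_coef half_plane_coef beta).
      split; [apply half_plane_extremal_in_A | apply Cmod_fs_functional_half_plane]; exact hbeta.
Qed.
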